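(* For $x\in\mathbb{C}\setminus\{1,2,3,\dots\}$ define $y_0(x)=\sum_{k=1}^{\infty}\prod_{j=1}^{k}\frac{1}{x-j}$. Then $y_0$ is a meromorphic solution of $y(x+1)=\frac{1}{x}y(x)+\frac{1}{x}$, with simple poles at the positive integers, $\operatorname{Res}(y_0;x=n)=e^{-1}/\Gamma(n)$ for $n\in\mathbb{N}$, $n\ge1$, and it has the Mittag-Leffler decomposition $$y_0(x)=e^{-1}\sum_{k=1}^{\infty}\frac{1}{(x-k)\,\Gamma(k)}.$$ Moreover, for $\arg x\neq 0$, $y_0(x)$ is asymptotic as $|x|\to\infty$ to the formal power series solution $\tilde y$ of the equation.
   Context: $\tilde y$ denotes the (unique) formal power series solution in powers of $1/x$ of the difference equation $y(x+1)=\frac{1}{x}y(x)+\frac{1}{x}$. *)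

From Stdlib Require Import Reals ClassicalEpsilon Arith.
From Coquelicot Require Import Coquelicot.
Open Scope R_scope.

Definition posint (x : C) : Prop := exists n : nat, (1 <= n)%nat /\ x = RtoC (INR n).

(* k-th term (k >= 0) of the series: prod_{j=1}^{k+1} 1/(x-j) *)
Fixpoint prod_inv (x : C) (k : nat) : C :=
  match k with
  | O => RtoC 1
  | S k' => Cmult (prod_inv x k') (Cinv (Cminus x (RtoC (INR k))))
  end.

Definition y0_term (x : C) (k : nat) : C := prod_inv x (S k).

Definition y0 (x : C) : C :=
  epsilon (inhabits (RtoC 0)) (fun l : C => is_series (y0_term x) l).

(* Coefficient of x^{-m} in the expansion of (x+1)^{-n} = x^{-n} (1+1/x)^{-n}
   in powers of 1/x:  binom(-n, m-n) = (-1)^(m-n) C(m-1, m-n) for 1 <= n <= m,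
   [m = 0] for n = 0, and 0 for m < n. *)
Definition shift_coef (n m : nat) : R :=
  if Nat.eqb n 0 then (if Nat.eqb m 0 then 1 else 0)
  else if Nat.leb n m then (-1) ^ (m - n) * Binomial.C (m - 1) (m - n)
  else 0.

(* a : nat -> C are the coefficients of a formal power series
   sum_{n>=0} a_n x^{-n} which formally solves y(x+1) = y(x)/x + 1/x:
   comparing coefficients of x^{-m} for every m. *)
Definition formal_solution (a : nat -> C) : Prop :=
  forall m : nat,
    sum_n (fun n => Cmult (RtoC (shift_coef n m)) (a n)) m =
    Cplus (match m with O => RtoC 0 | S m' => a m' end)
          (if Nat.eqb m 1 then RtoC 1 else RtoC 0).

Definition formal_partial (a : nat -> C) (N : nat) (x : C) : C :=
  sum_n (fun n => Cmult (a n) (Cinv (Cpow x n))) N.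

From Stdlib Require Import Reals Arith Lia Lra ClassicalEpsilon Classical.
From Coquelicot Require Import Coquelicot.
Open Scope R_scope.

(* Both [y0] and the Mittag-Leffler sum [ml x = sum_k e^-1 / (k! (x - k - 1))]
   converge off the positive integers and satisfy [y (x + 1) = (y x + 1) / x], so
   [g = y0 - ml] satisfies [g x = g (x - n) * prod_(j=1..n) 1 / (x - j)].  Both
   functions are bounded far to the left while the product decays like [2^-n],
   hence [g = 0].  Everything else is read off the Mittag-Leffler form: residues
   termwise, holomorphy from a uniform second-order Taylor bound, and the
   asymptotics from [1/(x-a) = sum_(n=1..N) a^(n-1) / x^n + a^N / (x^N (x-a))],
   whose coefficients [sum_k e^-1 (k+1)^(n-1) / k!] form the unique formal
   solution. *)

(* Coquelicot's structure projections hide the carrier; restating an equation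
   at type [C] (or [R]) lets [ring] and [field] recognise it. *)
Ltac change_C_eq := match goal with |- @eq _ ?a ?b => change (@eq C a b) end.
Ltac change_R_eq := match goal with |- @eq _ ?a ?b => change (@eq R a b) end.

Lemma Cinv_0 : Cinv 0 = 0.
Proof. unfold Cinv; simpl; unfold Rdiv; rewrite !Rmult_0_l, Ropp_0, Rmult_0_l; reflexivity. Qed.

Lemma Cinv_mult (z w : C) : w <> 0 -> (/ (z * w) = / z * / w)%C.
Proof.
  intros Hw; destruct (classic (z = 0)) as [->|Hz].
  - rewrite Cmult_0_l, Cinv_0; ring.
  - field; split; assumption.
Qed.

Lemma Cmod_inv_le (z : C) (m : R) : 0 < m -> m <= Cmod z -> Cmod (/ z) <= / m.
Proof.
  intros Hm Hz.
  assert (z <> 0) by (intros ->; rewrite Cmod_0 in Hz; lra).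
  rewrite Cmod_inv by assumption; apply Rinv_le_contravar; lra.
Qed.

Lemma Cmod_minus_sym (a b : C) : Cmod (a - b) = Cmod (b - a).
Proof. replace (a - b)%C with (- (b - a))%C by ring; apply Cmod_opp. Qed.

Lemma Cmod_minus_le (a b : C) : Cmod (a - b) <= Cmod a + Cmod b.
Proof. rewrite <- (Cmod_opp b); apply Cmod_triangle. Qed.

Lemma Cmod_minus_shift_ge (x y a : C) : Cmod (x - a) - Cmod (y - x) <= Cmod (y - a).
Proof.
  pose proof (Cmod_triangle (x - y) (y - a)) as H.
  replace (x - y + (y - a))%C with (x - a)%C in H by ring.
  rewrite (Cmod_minus_sym x y) in H; lra.
Qed.

Lemma Cmod_minus_INR_ge (x : C) (n : nat) : INR n - Cmod x <= Cmod (x - RtoC (INR n)).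
Proof.
  pose proof (Cmod_triangle x (RtoC (INR n) - x)) as H.
  replace (x + (RtoC (INR n) - x))%C with (RtoC (INR n)) in H by ring.
  rewrite Cmod_R, Rabs_pos_eq in H by apply pos_INR.
  rewrite Cmod_minus_sym; lra.
Qed.

Lemma Cmod_RtoC_nonneg (r : R) : 0 <= r -> Cmod (RtoC r) = r.
Proof. intros H; rewrite Cmod_R; apply Rabs_pos_eq, H. Qed.

Lemma sum_n_RtoC (a : nat -> R) N : sum_n (fun k => RtoC (a k)) N = RtoC (sum_n a N).
Proof.
  induction N as [|N IH]; [rewrite !sum_O; reflexivity|].
  rewrite !sum_Sn, IH; symmetry; apply RtoC_plus.
Qed.

Lemma sum_n_Cmod_le (a : nat -> C) (b : nat -> R) :
  (forall n, Cmod (a n) <= b n) -> forall N, Cmod (sum_n a N) <= sum_n b N.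
Proof.
  intros H N; induction N as [|N IH]; [rewrite !sum_O; apply H|].
  rewrite !sum_Sn; eapply Rle_trans; [apply Cmod_triangle|]; apply Rplus_le_compat; auto.
Qed.

Lemma is_series_Cmod_le (a : nat -> C) (b : nat -> R) la lb :
  is_series a la -> is_series b lb -> (forall n, Cmod (a n) <= b n) -> Cmod la <= lb.
Proof.
  intros Ha Hb H.
  assert (Hn : is_lim_seq (fun N => Cmod (sum_n a N)) (Cmod la)).
  { eapply filterlim_comp; [exact Ha|apply (filterlim_norm (V := C_NormedModule))]. }
  assert (Hb' : is_lim_seq (sum_n b) lb) by exact Hb.
  exact (is_lim_seq_le _ _ _ _ (sum_n_Cmod_le a b H) Hn Hb').
Qed.

Lemma ex_series_Cmod_le (a : nat -> C) (b : nat -> R) lb :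
  (forall n, Cmod (a n) <= b n) -> is_series b lb -> ex_series a.
Proof.
  intros H Hb; apply (ex_series_le (V := C_CompleteNormedModule)) with b; [exact H|].
  exists lb; exact Hb.
Qed.

Lemma is_series_C_unique (a : nat -> C) l1 l2 : is_series a l1 -> is_series a l2 -> l1 = l2.
Proof. intros H1 H2; exact (filterlim_locally_unique (F := eventually) _ _ _ H1 H2). Qed.

Definition Csum (a : nat -> C) : C := epsilon (inhabits (RtoC 0)) (fun l => is_series a l).

Lemma Csum_correct (a : nat -> C) : ex_series a -> is_series a (Csum a).
Proof. apply epsilon_spec. Qed.

Lemma Csum_unique (a : nat -> C) l : is_series a l -> Csum a = l.
Proof. intros H; apply (is_series_C_unique a); [apply Csum_correct; exists l|]; exact H. Qed.

Lemma is_series_RtoC (a : nat -> R) l :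
  is_series a l -> is_series (fun k => RtoC (a k)) (RtoC l).
Proof.
  intros H; unfold is_series.
  apply filterlim_ext with (fun N => RtoC (sum_n a N)); [intros N; symmetry; apply sum_n_RtoC|].
  apply filterlim_comp with (1 := H).
  intros P [e He]; exists e; intros y Hy; apply He.
  split; [exact Hy|apply ball_center].
Qed.

Lemma is_series_sum_n {K : AbsRing} {V : NormedModule K} (f : nat -> nat -> V) (l : nat -> V) m :
  (forall j, (j <= m)%nat -> is_series (f j) (l j)) ->
  is_series (fun k => sum_n (fun j => f j k) m) (sum_n l m).
Proof.
  induction m as [|m IH]; intros H.
  - rewrite sum_O; eapply is_series_ext; [|apply H; lia]; intros; rewrite sum_O; reflexivity.
  - rewrite sum_Sn; eapply is_series_ext;
      [|apply is_series_plus; [apply IH; intros; apply H; lia|apply H; lia]].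
    intros; rewrite sum_Sn; reflexivity.
Qed.

Lemma is_series_half_pow : is_series (fun k => (1/2)^k) 2.
Proof.
  assert (H := is_series_geom (1/2) ltac:(rewrite Rabs_pos_eq; lra)).
  replace (/ (1 - 1/2)) with 2 in H by field; exact H.
Qed.

Lemma finite_upper_bound (f : nat -> R) (K : nat) :
  exists A, forall i, (i <= K)%nat -> f i <= A.
Proof.
  induction K as [|K [A HA]].
  - exists (f 0%nat); intros i Hi; replace i with 0%nat by lia; lra.
  - exists (Rmax A (f (S K))); intros i Hi.
    destruct (Nat.eq_dec i (S K)) as [->|Hne]; [apply Rmax_r|].
    eapply Rle_trans; [apply HA; lia|apply Rmax_l].
Qed.

Lemma finite_lower_bound_pos (f : nat -> R) (K : nat) : (forall i, 0 < f i) ->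
  exists d, 0 < d /\ d <= 1 /\ forall i, (i <= K)%nat -> d <= f i.
Proof.
  intros Hf; induction K as [|K (d & Hd & Hd1 & HdK)].
  - exists (Rmin 1 (f 0%nat)); split; [apply Rmin_pos; auto; lra|split; [apply Rmin_l|]].
    intros i Hi; replace i with 0%nat by lia; apply Rmin_r.
  - exists (Rmin d (f (S K))); split; [apply Rmin_pos; auto|split].
    + eapply Rle_trans; [apply Rmin_l|exact Hd1].
    + intros i Hi; destruct (Nat.eq_dec i (S K)) as [->|Hne]; [apply Rmin_r|].
      eapply Rle_trans; [apply Rmin_l|apply HdK; lia].
Qed.

Lemma geometric_domination (p : nat -> R) (K : nat) :
  (forall k, (K <= k)%nat -> p (S k) <= p k / 2) -> exists A, forall k, p k <= A * (1/2)^k.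
Proof.
  intros H; destruct (finite_upper_bound (fun i => p i * 2^i) K) as [A HA].
  exists A.
  assert (Hscale : forall i, p i = p i * 2^i * (1/2)^i).
  { intros i; rewrite Rmult_assoc, <- Rpow_mult_distr.
    replace (2 * (1/2)) with 1 by field; rewrite pow1; ring. }
  assert (Hpos : forall i, 0 < (1/2)^i) by (intros; apply pow_lt; lra).
  induction k as [|k IH].
  - rewrite (Hscale 0%nat); apply Rmult_le_compat_r; [left; apply Hpos|apply HA; lia].
  - destruct (le_lt_dec (S k) K) as [Hk|Hk].
    + rewrite (Hscale (S k)); apply Rmult_le_compat_r; [left; apply Hpos|apply HA; lia].
    + eapply Rle_trans; [apply H; lia|]; simpl; lra.
Qed.

Lemma Cmod_eq_0_of_geometric_bound (z : C) (A : R) (N : nat) :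
  (forall n, (N <= n)%nat -> Cmod z <= A * (1/2)^n) -> z = 0.
Proof.
  intros H; apply Cmod_eq_0, Rle_antisym; [|apply Cmod_ge_0].
  assert (Hlim : is_lim_seq (fun n => A * (1/2)^n) (A * 0)).
  { apply (is_lim_seq_scal_l _ A 0), is_lim_seq_geom; rewrite Rabs_pos_eq; lra. }
  rewrite Rmult_0_r in Hlim.
  exact (is_lim_seq_le_loc (fun _ => Cmod z) _ (Cmod z) 0 (ex_intro _ N H)
           (is_lim_seq_const _) Hlim).
Qed.

Lemma not_posint_minus_neq_0 x k : ~ posint x -> (x - RtoC (INR (S k)))%C <> 0.
Proof.
  intros Hx E; apply Hx; exists (S k); split; [lia|]; apply Ceq_minus, E.
Qed.

Lemma not_posint_of_minus_neq_0 x : (forall k, (x - RtoC (INR (S k)))%C <> 0) -> ~ posint x.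
Proof.
  intros H [[|k] [Hk E]]; [lia|]; apply (H k); rewrite E; ring.
Qed.

Lemma not_posint_minus_INR x n : ~ posint x -> ~ posint (x - RtoC (INR n))%C.
Proof.
  intros Hx [m [Hm E]]; apply Hx; exists (m + n)%nat; split; [lia|].
  rewrite plus_INR, RtoC_plus, <- E; ring.
Qed.

Lemma Cmod_minus_succ_ge x K k : Cmod x + 1 <= INR K -> (K <= k)%nat ->
  1 <= Cmod (x - RtoC (INR (S k))).
Proof.
  intros HK Hk; pose proof (Cmod_minus_INR_ge x (S k)).
  assert (INR K <= INR k) by (apply le_INR, Hk); rewrite S_INR in *; lra.
Qed.

Lemma posint_dist_pos x : ~ posint x ->
  exists d, 0 < d /\ forall k, d <= Cmod (x - RtoC (INR (S k))).
Proof.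
  intros Hx; destruct (INR_unbounded (Cmod x + 1)) as [K HK].
  destruct (finite_lower_bound_pos (fun k => Cmod (x - RtoC (INR (S k)))) K) as (d & Hd & Hd1 & HdK).
  { intros k; apply Cmod_gt_0, not_posint_minus_neq_0, Hx. }
  exists d; split; [exact Hd|]; intros k.
  destruct (le_lt_dec k K) as [Hk|Hk]; [apply HdK, Hk|].
  pose proof (Cmod_minus_succ_ge x K k ltac:(lra) ltac:(lia)); lra.
Qed.

Lemma prod_inv_S x k : prod_inv x (S k) = (prod_inv x k * / (x - RtoC (INR (S k))))%C.
Proof. reflexivity. Qed.

Lemma prod_inv_le_geometric x : exists A, forall k, Cmod (prod_inv x k) <= A * (1/2)^k.
Proof.
  destruct (INR_unbounded (Cmod x + 2)) as [K HK].
  apply (geometric_domination (fun k => Cmod (prod_inv x k)) K); intros k Hk.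
  rewrite prod_inv_S, Cmod_mult.
  assert (Cmod (/ (x - RtoC (INR (S k)))) <= / 2).
  { apply Cmod_inv_le; [lra|]. pose proof (Cmod_minus_INR_ge x (S k)).
    assert (INR K <= INR (S k)) by (apply le_INR; lia); lra. }
  pose proof (Cmod_ge_0 (prod_inv x k)); nra.
Qed.

Lemma prod_inv_le_half_pow z : (forall j, 2 <= Cmod (z - RtoC (INR (S j)))) ->
  forall k, Cmod (prod_inv z k) <= (1/2)^k.
Proof.
  intros H; induction k as [|k IH]; [simpl prod_inv; rewrite Cmod_1; simpl; lra|].
  rewrite prod_inv_S, Cmod_mult; change ((1/2)^(S k)) with (1/2 * (1/2)^k).
  assert (Cmod (/ (z - RtoC (INR (S k)))) <= / 2) by (apply Cmod_inv_le; auto; lra).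
  rewrite Rmult_comm; apply Rmult_le_compat; auto using Cmod_ge_0; lra.
Qed.

Lemma is_series_y0 x : is_series (y0_term x) (y0 x).
Proof.
  apply Csum_correct; destruct (prod_inv_le_geometric x) as [A HA].
  apply (ex_series_Cmod_le _ (fun k => (1/2)^k * (A / 2)) (2 * (A / 2))).
  - intros k; unfold y0_term; eapply Rle_trans; [apply (HA (S k))|]; simpl; lra.
  - apply is_series_scal_r, is_series_half_pow.
Qed.

Lemma prod_inv_shift x k : prod_inv (x + 1)%C (S k) = (/ x * prod_inv x k)%C.
Proof.
  induction k as [|k IH].
  - rewrite prod_inv_S; simpl prod_inv; simpl INR.
    replace (x + 1 - RtoC 1)%C with x by ring; ring.
  - rewrite prod_inv_S, IH, (prod_inv_S x k).
    replace (x + 1 - RtoC (INR (S (S k))))%C with (x - RtoC (INR (S k)))%C; [ring|].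
    rewrite (S_INR (S k)), RtoC_plus; ring.
Qed.

Lemma y0_shift x : y0 (x + 1)%C = (/ x * y0 x + / x)%C.
Proof.
  apply Csum_unique.
  assert (H : is_series (prod_inv x) (y0 x + 1)%C).
  { apply is_series_decr_1.
    match goal with |- is_series _ ?L => replace L with (y0 x) end; [apply is_series_y0|].
    simpl prod_inv; change plus with Cplus; change opp with Copp; change_C_eq; ring. }
  apply (is_series_scal_l (/ x)%C) in H.
  replace (/ x * y0 x + / x)%C with (scal (/ x)%C (y0 x + 1)%C)
    by (change scal with Cmult; change_C_eq; ring).
  eapply is_series_ext; [|exact H]; intros n; unfold y0_term; rewrite prod_inv_shift; reflexivity.
Qed.

Lemma Cmod_y0_le_1 z : (forall j, 2 <= Cmod (z - RtoC (INR (S j)))) -> Cmod (y0 z) <= 1.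
Proof.
  intros H; assert (Hs := is_series_scal_r (1/2) _ _ is_series_half_pow).
  replace (2 * (1/2)) with 1 in Hs by field.
  apply (is_series_Cmod_le _ _ _ _ (is_series_y0 z) Hs); intros k.
  eapply Rle_trans; [apply (prod_inv_le_half_pow z H (S k))|]; right; simpl; ring.
Qed.

Definition ml_coef (k : nat) : R := exp (-1) / INR (fact k).

Lemma ml_coef_pos k : 0 < ml_coef k.
Proof. apply Rdiv_lt_0_compat; [apply exp_pos|apply INR_fact_lt_0]. Qed.

Lemma ml_coef_S k : ml_coef (S k) * INR (S k) = ml_coef k.
Proof.
  unfold ml_coef; rewrite fact_simpl, mult_INR.
  field; split; [apply INR_fact_neq_0|apply not_0_INR; lia].
Qed.

Lemma is_series_ml_coef : is_series ml_coef 1.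
Proof.
  assert (He : is_series (fun k => / INR (fact k)) (exp 1)).
  { apply (is_series_ext (fun k => / INR (fact k) * 1 ^ k)); [intros; rewrite pow1; apply Rmult_1_r|].
    apply is_series_Reals; exact (proj2_sig (exist_exp 1)). }
  apply (is_series_scal_r (exp (-1))) in He.
  rewrite <- exp_plus, Rplus_opp_r, exp_0 in He.
  eapply is_series_ext; [|exact He]; intros k; unfold ml_coef, Rdiv; change_R_eq; ring.
Qed.

Definition ml_term (x : C) (k : nat) : C := (RtoC (ml_coef k) * / (x - RtoC (INR (S k))))%C.

Definition ml (x : C) : C := Csum (ml_term x).

Lemma Cmod_ml_term_le x d k : 0 < d -> d <= Cmod (x - RtoC (INR (S k))) ->
  Cmod (ml_term x k) <= ml_coef k * / d.
Proof.
  intros Hd Hk; unfold ml_term; rewrite Cmod_mult, Cmod_RtoC_nonneg by (left; apply ml_coef_pos).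
  apply Rmult_le_compat_l; [left; apply ml_coef_pos|apply Cmod_inv_le; assumption].
Qed.

Lemma is_series_ml x : ~ posint x -> is_series (ml_term x) (ml x).
Proof.
  intros Hx; apply Csum_correct; destruct (posint_dist_pos x Hx) as [d [Hd Hdk]].
  apply (ex_series_Cmod_le _ (fun k => ml_coef k * / d) (1 * / d)).
  - intros k; apply Cmod_ml_term_le; auto.
  - apply is_series_scal_r, is_series_ml_coef.
Qed.

Lemma Cmod_ml_le_1 z : (forall j, 1 <= Cmod (z - RtoC (INR (S j)))) -> Cmod (ml z) <= 1.
Proof.
  intros H.
  assert (Hz : ~ posint z).
  { apply not_posint_of_minus_neq_0; intros k E; specialize (H k); rewrite E, Cmod_0 in H; lra. }
  apply (is_series_Cmod_le _ _ _ _ (is_series_ml z Hz) is_series_ml_coef); intros k.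
  eapply Rle_trans; [apply (Cmod_ml_term_le z 1); auto; lra|]; rewrite Rinv_1, Rmult_1_r; lra.
Qed.

(* Termwise, [z * ml_term (z + 1) k] is [ml_coef k] plus the [(k-1)]-th term of
   [ml z] (nothing for [k = 0]); the first parts sum to [1], the second to [ml z]. *)
Lemma ml_shift z : (forall k, z <> RtoC (INR k)) -> (z * ml (z + 1) = ml z + 1)%C.
Proof.
  intros Hz.
  assert (Hz1 : ~ posint z) by (intros [k [_ E]]; exact (Hz k E)).
  assert (Hz2 : ~ posint (z + 1)%C).
  { apply not_posint_of_minus_neq_0; intros k E; apply (Hz k), Ceq_minus.
    rewrite <- E, S_INR, RtoC_plus; ring. }
  set (e := fun k => match k with O => RtoC 0 | S j => ml_term z j end).
  assert (Hterm : forall k, (z * ml_term (z + 1) k = RtoC (ml_coef k) + e k)%C).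
  { intros k; unfold ml_term.
    replace (z + 1 - RtoC (INR (S k)))%C with (z - RtoC (INR k))%C
      by (rewrite S_INR, RtoC_plus; ring).
    destruct k as [|j]; simpl e.
    - simpl INR; replace (z - RtoC 0)%C with z by ring; field; exact (Hz 0%nat).
    - unfold ml_term; rewrite <- (ml_coef_S j), RtoC_mult.
      field; intros E; apply (Hz (S j)), Ceq_minus, E. }
  assert (He : is_series e (ml z)).
  { apply is_series_decr_1.
    match goal with |- is_series _ ?L => replace L with (ml z) end; [apply is_series_ml, Hz1|].
    simpl e; change plus with Cplus; change opp with Copp; change_C_eq; ring. }
  assert (Hsum := is_series_plus _ _ _ _ (is_series_RtoC _ _ is_series_ml_coef) He).
  assert (Hprod := is_series_scal_l z _ _ (is_series_ml _ Hz2)).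
  transitivity (plus (RtoC 1) (ml z)); [|change plus with Cplus; ring].
  apply (is_series_C_unique _ _ _ Hprod); eapply is_series_ext; [|exact Hsum].
  intros n; symmetry; apply Hterm.
Qed.

Lemma y0_minus_ml_shift z : ~ posint (z + 1)%C ->
  (y0 (z + 1) - ml (z + 1) = / z * (y0 z - ml z))%C.
Proof.
  intros H.
  assert (Hz : forall k, z <> RtoC (INR k)).
  { intros k E; apply H; exists (S k); split; [lia|]; rewrite E, S_INR, RtoC_plus; reflexivity. }
  assert (Hz0 : z <> 0) by exact (Hz 0%nat).
  rewrite y0_shift.
  replace (ml (z + 1)) with (/ z * (ml z + 1))%C
    by (rewrite <- (ml_shift z Hz); field; exact Hz0).
  ring.
Qed.

Lemma y0_minus_ml_iter x n : ~ posint x ->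
  (y0 x - ml x = (y0 (x - RtoC (INR n)) - ml (x - RtoC (INR n))) * prod_inv x n)%C.
Proof.
  intros Hx; induction n as [|n IH].
  - simpl INR; simpl prod_inv; replace (x - RtoC 0)%C with x by ring; ring.
  - rewrite IH, prod_inv_S.
    replace (x - RtoC (INR n))%C with (x - RtoC (INR (S n)) + 1)%C
      by (rewrite S_INR, RtoC_plus; ring).
    rewrite y0_minus_ml_shift; [ring|].
    replace (x - RtoC (INR (S n)) + 1)%C with (x - RtoC (INR n))%C
      by (rewrite S_INR, RtoC_plus; ring).
    apply not_posint_minus_INR, Hx.
Qed.

Lemma y0_eq_ml x : ~ posint x -> y0 x = ml x.
Proof.
  intros Hx; destruct (prod_inv_le_geometric x) as [A HA].
  destruct (INR_unbounded (Cmod x + 2)) as [K HK].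
  apply Ceq_minus, (Cmod_eq_0_of_geometric_bound _ (2 * A) K); intros n Hn.
  rewrite (y0_minus_ml_iter x n Hx), Cmod_mult.
  set (z := (x - RtoC (INR n))%C).
  assert (Hz : forall j, 2 <= Cmod (z - RtoC (INR (S j)))).
  { intros j; unfold z.
    replace (x - RtoC (INR n) - RtoC (INR (S j)))%C with (x - RtoC (INR (n + S j)))%C
      by (rewrite plus_INR, RtoC_plus; ring).
    pose proof (Cmod_minus_INR_ge x (n + S j)).
    assert (INR K + 1 <= INR (n + S j)) by (rewrite <- S_INR; apply le_INR; lia); lra. }
  assert (Hy := Cmod_y0_le_1 z Hz).
  assert (Hm : Cmod (ml z) <= 1) by (apply Cmod_ml_le_1; intros j; specialize (Hz j); lra).
  pose proof (Cmod_minus_le (y0 z) (ml z)); pose proof (HA n).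
  pose proof (Cmod_ge_0 (prod_inv x n)); pose proof (Cmod_ge_0 (y0 z - ml z)); nra.
Qed.

Lemma ex_derive_C_of_quadratic_bound (f : C -> C) (x L : C) (K d : R) : 0 < d ->
  (forall y, Cmod (y - x) < d ->
     Cmod (f y - f x - (y - x) * L) <= K * (Cmod (y - x) * Cmod (y - x))) ->
  @ex_derive C_AbsRing C_NormedModule f x.
Proof.
  intros Hd H; exists L; split; [apply is_linear_scal_l|].
  intros xp Hxp.
  apply (is_filter_lim_locally_unique (K := C_AbsRing) (V := AbsRing_NormedModule C_AbsRing))
    in Hxp; subst xp.
  intros eps; pose proof (cond_pos eps) as Heps.
  assert (HK : 0 < Rabs K + 1) by (pose proof (Rabs_pos K); lra).
  assert (Hdel : 0 < Rmin d (eps / (Rabs K + 1))) by (apply Rmin_pos; [|apply Rdiv_lt_0_compat]; lra).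
  exists (mkposreal _ Hdel).
  change (forall y : C, Cmod (y - x) < Rmin d (eps / (Rabs K + 1)) ->
            Cmod (f y - f x - (y - x) * L) <= eps * Cmod (y - x)); intros y Hy.
  pose proof (Rmin_l d (eps / (Rabs K + 1))); pose proof (Rmin_r d (eps / (Rabs K + 1))).
  pose proof (Cmod_ge_0 (y - x)).
  assert (Hm : Cmod (y - x) * (Rabs K + 1) <= eps).
  { apply (Rmult_le_reg_r (/ (Rabs K + 1))); [apply Rinv_0_lt_compat, HK|].
    rewrite Rmult_assoc, Rinv_r by lra; unfold Rdiv in *; lra. }
  eapply Rle_trans; [apply H; lra|].
  pose proof (Rle_abs K); nra.
Qed.

Definition ml_term_deriv (x : C) (k : nat) : C :=
  (- RtoC (ml_coef k) * / (x - RtoC (INR (S k))) * / (x - RtoC (INR (S k))))%C.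

Lemma Cmod_ml_term_taylor_le x y d k : 0 < d ->
  d <= Cmod (x - RtoC (INR (S k))) -> d / 2 <= Cmod (y - RtoC (INR (S k))) ->
  Cmod (ml_term y k - ml_term x k - (y - x) * ml_term_deriv x k) <=
  ml_coef k * (Cmod (y - x) * Cmod (y - x) * (/ d * / d * / (d / 2))).
Proof.
  intros Hd Hx Hy; set (a := RtoC (INR (S k))) in *.
  assert (Hxa : (x - a)%C <> 0) by (intros E; rewrite E, Cmod_0 in Hx; lra).
  assert (Hya : (y - a)%C <> 0) by (intros E; rewrite E, Cmod_0 in Hy; lra).
  unfold ml_term, ml_term_deriv; fold a.
  replace (RtoC (ml_coef k) * / (y - a) - RtoC (ml_coef k) * / (x - a) -
           (y - x) * (- RtoC (ml_coef k) * / (x - a) * / (x - a)))%C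
    with (RtoC (ml_coef k) * (y - x) * (y - x) * / (x - a) * / (x - a) * / (y - a))%C
    by (field; split; assumption).
  rewrite !Cmod_mult, Cmod_RtoC_nonneg by (left; apply ml_coef_pos).
  pose proof (Cmod_inv_le _ _ Hd Hx); pose proof (Cmod_inv_le _ (d / 2) ltac:(lra) Hy).
  pose proof (ml_coef_pos k); pose proof (Cmod_ge_0 (y - x)).
  pose proof (Cmod_ge_0 (/ (x - a))%C); pose proof (Cmod_ge_0 (/ (y - a))%C).
  rewrite !Rmult_assoc; do 3 (apply Rmult_le_compat_l; [lra|]).
  apply Rmult_le_compat; [lra|apply Rmult_le_pos; lra|lra|].
  apply Rmult_le_compat; lra.
Qed.

Lemma ml_quadratic_bound x d : 0 < d -> (forall k, d <= Cmod (x - RtoC (INR (S k)))) ->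
  exists L, forall y, Cmod (y - x) < d / 2 ->
    Cmod (ml y - ml x - (y - x) * L) <= 2 / (d * d * d) * (Cmod (y - x) * Cmod (y - x)).
Proof.
  intros Hd Hx.
  assert (HxS : forall k, (x - RtoC (INR (S k)))%C <> 0).
  { intros k E; specialize (Hx k); rewrite E, Cmod_0 in Hx; lra. }
  assert (HD : is_series (ml_term_deriv x) (Csum (ml_term_deriv x))).
  { apply Csum_correct, (ex_series_Cmod_le _ (fun k => ml_coef k * (/ d * / d)) (1 * (/ d * / d))).
    - intros k; unfold ml_term_deriv.
      rewrite !Cmod_mult, Cmod_opp, Cmod_RtoC_nonneg by (left; apply ml_coef_pos).
      pose proof (ml_coef_pos k); pose proof (Cmod_inv_le _ _ Hd (Hx k)).
      pose proof (Cmod_ge_0 (/ (x - RtoC (INR (S k))))%C).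
      rewrite Rmult_assoc; apply Rmult_le_compat_l; [lra|]; apply Rmult_le_compat; lra.
    - apply is_series_scal_r, is_series_ml_coef. }
  exists (Csum (ml_term_deriv x)); intros y Hy.
  assert (Hy2 : forall k, d / 2 <= Cmod (y - RtoC (INR (S k)))).
  { intros k; pose proof (Hx k); pose proof (Cmod_minus_shift_ge x y (RtoC (INR (S k)))); lra. }
  assert (HyS : forall k, (y - RtoC (INR (S k)))%C <> 0).
  { intros k E; specialize (Hy2 k); rewrite E, Cmod_0 in Hy2; lra. }
  assert (Hrem := is_series_minus _ _ _ _
    (is_series_minus _ _ _ _ (is_series_ml y (not_posint_of_minus_neq_0 y HyS))
                             (is_series_ml x (not_posint_of_minus_neq_0 x HxS)))
    (is_series_scal_l (y - x)%C _ _ HD)).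
  assert (Hb := is_series_scal_r (Cmod (y - x) * Cmod (y - x) * (/ d * / d * / (d / 2)))
                  _ _ is_series_ml_coef).
  replace (2 / (d * d * d) * (Cmod (y - x) * Cmod (y - x)))
    with (1 * (Cmod (y - x) * Cmod (y - x) * (/ d * / d * / (d / 2)))) by (field; lra).
  apply (is_series_Cmod_le _ _ _ _ Hrem Hb); intros k.
  exact (Cmod_ml_term_taylor_le x y d k Hd (Hx k) (Hy2 k)).
Qed.

Lemma ex_derive_y0 x : ~ posint x -> @ex_derive C_AbsRing C_NormedModule y0 x.
Proof.
  intros Hx; destruct (posint_dist_pos x Hx) as [d [Hd Hdk]].
  destruct (ml_quadratic_bound x d Hd Hdk) as [L HL].
  apply (ex_derive_C_of_quadratic_bound _ x L (2 / (d * d * d)) (d / 2)); [lra|]; intros y Hy.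
  assert (Hy_np : ~ posint y).
  { apply not_posint_of_minus_neq_0; intros k E.
    pose proof (Hdk k); pose proof (Cmod_minus_shift_ge x y (RtoC (INR (S k)))).
    rewrite E, Cmod_0 in *; lra. }
  rewrite (y0_eq_ml y Hy_np), (y0_eq_ml x Hx); apply HL, Hy.
Qed.

(* The uniform structure of [C] is the product one, whose balls are squares:
   the square of half-side [d / 2] lies in the disc of radius [d]. *)
Lemma locally_C_Cmod (x : C) (d : R) : 0 < d -> locally x (fun y => Cmod (y - x) < d).
Proof.
  intros Hd; assert (Hd2 : 0 < d / 2) by lra.
  exists (mkposreal _ Hd2); intros y Hy.
  apply C_NormedModule_mixin_compat2 in Hy; simpl in Hy.
  change (minus y x) with (y - x)%C in Hy.
  assert (Hs : sqrt 2 < 2).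
  { pose proof (sqrt_sqrt 2 ltac:(lra)); pose proof (sqrt_pos 2); nra. }
  pose proof (sqrt_pos 2); pose proof (Cmod_ge_0 (y - x)); nra.
Qed.

Lemma filterlim_within_of_linear_bound (f : C -> C) (P : C -> Prop) (a l : C) (K d : R) :
  0 < d -> (forall x, P x -> Cmod (x - a) < d -> Cmod (f x - l) <= K * Cmod (x - a)) ->
  filterlim f (within P (locally a)) (locally l).
Proof.
  intros Hd H; apply filterlim_locally; intros eps; pose proof (cond_pos eps).
  assert (HK : 0 < Rabs K + 1) by (pose proof (Rabs_pos K); lra).
  assert (Hdel : 0 < Rmin d (eps / (Rabs K + 1))) by (apply Rmin_pos; [|apply Rdiv_lt_0_compat]; lra).
  unfold within; eapply filter_imp; [|apply (locally_C_Cmod a _ Hdel)]; intros x Hx HPx.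
  pose proof (Rmin_l d (eps / (Rabs K + 1))); pose proof (Rmin_r d (eps / (Rabs K + 1))).
  pose proof (Cmod_ge_0 (x - a)).
  assert (Hm : Cmod (x - a) * (Rabs K + 1) < eps).
  { apply (Rmult_lt_reg_r (/ (Rabs K + 1))); [apply Rinv_0_lt_compat, HK|].
    rewrite Rmult_assoc, Rinv_r by lra; unfold Rdiv in *; lra. }
  apply C_NormedModule_mixin_compat1.
  eapply Rle_lt_trans; [apply H; auto; lra|]; pose proof (Rle_abs K); nra.
Qed.

Lemma is_series_single (m : nat) (v : C) :
  is_series (fun k => if Nat.eqb k m then v else RtoC 0) v.
Proof.
  assert (Hsum : forall N, sum_n (fun k => if Nat.eqb k m then v else RtoC 0) N =
                           if Nat.leb m N then v else RtoC 0).
  { induction N as [|N IH].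
    - rewrite sum_O; destruct m; reflexivity.
    - rewrite sum_Sn, IH; change plus with Cplus.
      destruct (Nat.leb_spec m N), (Nat.eqb_spec (S N) m), (Nat.leb_spec m (S N));
        try lia; change_C_eq; ring. }
  unfold is_series; apply filterlim_ext_loc with (fun _ => v); [|apply filterlim_const].
  exists m; intros N HN; rewrite Hsum; destruct (Nat.leb_spec m N); [reflexivity|lia].
Qed.

Lemma Cmod_INR_minus_INR_ge_1 (m k : nat) : k <> m ->
  1 <= Cmod (RtoC (INR m) - RtoC (INR k)).
Proof.
  intros Hkm; rewrite <- RtoC_minus, Cmod_R.
  destruct (proj1 (Nat.lt_gt_cases k m) Hkm) as [H|H]; apply le_INR in H; rewrite S_INR in H.
  - rewrite Rabs_pos_eq; lra.
  - rewrite Rabs_left1; lra.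
Qed.

Lemma Cmod_minus_other_posint_ge (m k : nat) (x : C) : k <> m ->
  Cmod (x - RtoC (INR (S m))) < 1 / 2 -> 1 / 2 <= Cmod (x - RtoC (INR (S k))).
Proof.
  intros Hkm Hx.
  assert (1 <= Cmod (RtoC (INR (S m)) - RtoC (INR (S k)))) by (apply Cmod_INR_minus_INR_ge_1; lia).
  pose proof (Cmod_minus_shift_ge (RtoC (INR (S m))) x (RtoC (INR (S k)))); lra.
Qed.

Lemma not_posint_near_posint (m : nat) (x : C) : x <> RtoC (INR (S m)) ->
  Cmod (x - RtoC (INR (S m))) < 1 / 2 -> ~ posint x.
Proof.
  intros Hxa Hx; apply not_posint_of_minus_neq_0; intros k E.
  destruct (Nat.eq_dec k m) as [->|Hkm]; [exact (Hxa (proj2 (Ceq_minus _ _) E))|].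
  pose proof (Cmod_minus_other_posint_ge m k x Hkm Hx); rewrite E, Cmod_0 in *; lra.
Qed.

Lemma ml_residue_bound (m : nat) (x : C) : x <> RtoC (INR (S m)) ->
  Cmod (x - RtoC (INR (S m))) < 1 / 2 ->
  Cmod ((x - RtoC (INR (S m))) * ml x - RtoC (ml_coef m)) <= 2 * Cmod (x - RtoC (INR (S m))).
Proof.
  intros Hxa Hx; assert (Hnp := not_posint_near_posint m x Hxa Hx).
  assert (Hxa0 := not_posint_minus_neq_0 x m Hnp).
  assert (Hs := is_series_minus _ _ _ _ (is_series_scal_l (x - RtoC (INR (S m)))%C _ _ (is_series_ml x Hnp))
                  (is_series_single m (RtoC (ml_coef m)))).
  assert (Hb := is_series_scal_r (2 * Cmod (x - RtoC (INR (S m)))) _ _ is_series_ml_coef).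
  rewrite Rmult_1_l in Hb; apply (is_series_Cmod_le _ _ _ _ Hs Hb); intros k.
  change (Cmod ((x - RtoC (INR (S m))) * ml_term x k -
                (if Nat.eqb k m then RtoC (ml_coef m) else RtoC 0))
          <= ml_coef k * (2 * Cmod (x - RtoC (INR (S m))))).
  pose proof (ml_coef_pos k); pose proof (Cmod_ge_0 (x - RtoC (INR (S m)))).
  destruct (Nat.eqb_spec k m) as [->|Hkm].
  - replace ((x - RtoC (INR (S m))) * ml_term x m - RtoC (ml_coef m))%C with (RtoC 0)
      by (unfold ml_term; field; exact Hxa0).
    rewrite Cmod_0; nra.
  - replace ((x - RtoC (INR (S m))) * ml_term x k - RtoC 0)%C
      with ((x - RtoC (INR (S m))) * ml_term x k)%C by ring.
    rewrite Cmod_mult.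
    pose proof (Cmod_ml_term_le x (1 / 2) k ltac:(lra) (Cmod_minus_other_posint_ge m k x Hkm Hx)).
    replace (/ (1 / 2)) with 2 in * by field; nra.
Qed.

Lemma y0_residue (n : nat) : (1 <= n)%nat ->
  filterlim (fun x : C => (x - RtoC (INR n)) * y0 x)%C
    (within (fun x : C => x <> RtoC (INR n)) (locally (RtoC (INR n))))
    (locally (RtoC (exp (-1) / INR (fact (n - 1))))).
Proof.
  intros Hn; destruct n as [|m]; [lia|]; rewrite Nat.sub_succ, Nat.sub_0_r.
  apply (filterlim_within_of_linear_bound _ _ _ _ 2 (1 / 2)); [lra|]; intros x Hxa Hx.
  rewrite y0_eq_ml by exact (not_posint_near_posint m x Hxa Hx).
  apply ml_residue_bound; assumption.
Qed.

Definition ml_moment_term (j k : nat) : R := ml_coef k * INR (S k) ^ j.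

(* [ml_moment j] is the [j]-th moment of [K + 1] for [K] Poisson(1)-distributed;
   by Dobinski's formula it is the Bell number [B_(j+1)]. *)
Definition ml_moment (j : nat) : R := Series (ml_moment_term j).

Lemma ml_moment_term_ratio j k : 2 ^ S j <= INR (S k) ->
  ml_moment_term j (S k) <= ml_moment_term j k / 2.
Proof.
  intros Hk; unfold ml_moment_term.
  rewrite <- (ml_coef_S k); pose proof (ml_coef_pos (S k)).
  assert (Hk0 : 0 < INR (S k)) by (apply lt_0_INR; lia).
  assert (H2 : INR (S (S k)) ^ j <= (2 * INR (S k)) ^ j).
  { apply pow_incr; split; [apply pos_INR|]; rewrite !S_INR; pose proof (pos_INR k); lra. }
  rewrite Rpow_mult_distr in H2; change (2 ^ S j) with (2 * 2 ^ j) in Hk.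
  pose proof (pow_le (INR (S k)) j (pos_INR _)); pose proof (pow_le 2 j ltac:(lra)).
  replace (ml_coef (S k) * INR (S k) * INR (S k) ^ j / 2)
    with (ml_coef (S k) * (INR (S k) / 2 * INR (S k) ^ j)) by field.
  apply Rmult_le_compat_l; [lra|]; eapply Rle_trans; [exact H2|].
  apply Rmult_le_compat_r; lra.
Qed.

Lemma is_series_ml_moment j : is_series (ml_moment_term j) (ml_moment j).
Proof.
  apply Series_correct; destruct (INR_unbounded (2 ^ S j)) as [K HK].
  destruct (geometric_domination (ml_moment_term j) K) as [A HA].
  { intros k Hk; apply ml_moment_term_ratio.
    assert (INR K <= INR (S k)) by (apply le_INR; lia); lra. }
  apply (ex_series_le (V := R_CompleteNormedModule)) with (fun k => (1/2)^k * A).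
  - intros k; change norm with Rabs; rewrite Rmult_comm, Rabs_pos_eq; [apply HA|].
    apply Rmult_le_pos; [left; apply ml_coef_pos|apply pow_le, pos_INR].
  - exists (2 * A); apply is_series_scal_r, is_series_half_pow.
Qed.

Lemma sum_n_succ_first {G : AbelianMonoid} (a : nat -> G) n :
  sum_n a (S n) = plus (a 0%nat) (sum_n (fun j => a (S j)) n).
Proof. unfold sum_n; rewrite sum_Sn_m by lia; rewrite sum_n_m_S; reflexivity. Qed.

Lemma binomial_alternating_sum (m : nat) (t : R) :
  sum_n (fun j => (-1) ^ (m - j) * Binomial.C m (m - j) * (t + 1) ^ j) m = t ^ m.
Proof.
  rewrite sum_n_Reals; transitivity ((t + 1 + -1) ^ m); [|f_equal; ring].
  rewrite binomial; apply sum_eq; intros i Hi; rewrite <- pascal_step1 by lia; ring.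
Qed.

Lemma is_series_ml_coef_pow (m : nat) :
  is_series (fun k => ml_coef k * INR k ^ m)
    (sum_n (fun j => (-1) ^ (m - j) * Binomial.C m (m - j) * ml_moment j) m).
Proof.
  eapply is_series_ext;
    [|apply (is_series_sum_n (fun j k => (-1) ^ (m - j) * Binomial.C m (m - j) * ml_moment_term j k))].
  - intros k; cbv beta; rewrite <- (binomial_alternating_sum m (INR k)), <- S_INR.
    rewrite !sum_n_Reals, scal_sum; apply sum_eq; intros j _.
    unfold ml_moment_term; ring.
  - intros j _; exact (is_series_scal_l _ _ _ (is_series_ml_moment j)).
Qed.

Lemma is_series_ml_coef_pow_succ (j : nat) :
  is_series (fun k => ml_coef k * INR k ^ S j) (ml_moment j).
Proof.
  apply is_series_decr_1.
  match goal with |- is_series _ ?L => replace L with (ml_moment j) end.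
  - eapply is_series_ext; [|apply is_series_ml_moment]; intros k.
    unfold ml_moment_term; rewrite <- (ml_coef_S k), <- tech_pow_Rmult; change_R_eq; ring.
  - simpl INR; rewrite pow_i by lia; change plus with Rplus; change opp with Ropp; change_R_eq; ring.
Qed.

Definition formal_coef (n : nat) : R := match n with O => 0 | S j => ml_moment j end.

Lemma shift_coef_diag m : shift_coef m m = 1.
Proof.
  unfold shift_coef; destruct m as [|m]; [reflexivity|]; simpl Nat.eqb.
  rewrite Nat.leb_refl, Nat.sub_diag, C_n_0; simpl; ring.
Qed.

Lemma shift_coef_S_S j m : (j <= m)%nat ->
  shift_coef (S j) (S m) = (-1) ^ (m - j) * Binomial.C m (m - j).
Proof.
  intros H; unfold shift_coef; change (Nat.eqb (S j) 0) with false; cbv iota.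
  replace (Nat.leb (S j) (S m)) with true by (symmetry; apply Nat.leb_le; lia).
  replace (S m - S j)%nat with (m - j)%nat by lia; rewrite Nat.sub_1_r; reflexivity.
Qed.

Lemma formal_coef_relation m :
  sum_n (fun n => shift_coef n m * formal_coef n) m =
  (match m with O => 0 | S m' => formal_coef m' end) + (if Nat.eqb m 1 then 1 else 0).
Proof.
  destruct m as [|m]; [rewrite sum_O; simpl; ring|].
  rewrite sum_n_succ_first; change plus with Rplus; simpl formal_coef at 1; rewrite Rmult_0_r, Rplus_0_l.
  rewrite (sum_n_ext_loc _ (fun j => (-1) ^ (m - j) * Binomial.C m (m - j) * ml_moment j))
    by (intros j Hj; rewrite shift_coef_S_S by lia; reflexivity).
  rewrite <- (is_series_unique _ _ (is_series_ml_coef_pow m)).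
  destruct m as [|m].
  - simpl formal_coef; rewrite Rplus_0_l; apply is_series_unique.
    eapply is_series_ext; [|exact is_series_ml_coef]; intros k; simpl; ring.
  - simpl formal_coef; simpl Nat.eqb; rewrite Rplus_0_r.
    apply is_series_unique, is_series_ml_coef_pow_succ.
Qed.

Lemma formal_solution_formal_coef : formal_solution (fun n => RtoC (formal_coef n)).
Proof.
  intros m.
  rewrite (sum_n_ext _ (fun n => RtoC (shift_coef n m * formal_coef n)))
    by (intros n; symmetry; apply RtoC_mult).
  rewrite sum_n_RtoC, formal_coef_relation, RtoC_plus.
  destruct m as [|[|m]]; reflexivity.
Qed.

(* The coefficient of [x^-m] involves [a m] with factor [shift_coef m m = 1]
   and otherwise only [a n] for [n < m]. *)
Lemma formal_solution_unique (a b : nat -> C) :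
  formal_solution a -> formal_solution b -> forall n, a n = b n.
Proof.
  intros Ha Hb n; induction n as [n IH] using (well_founded_induction lt_wf).
  pose proof (Ha n) as H1; pose proof (Hb n) as H2.
  destruct n as [|n].
  - rewrite sum_O, shift_coef_diag in H1, H2.
    rewrite <- (Cmult_1_l (a 0%nat)), <- (Cmult_1_l (b 0%nat)), H1, H2; reflexivity.
  - rewrite sum_Sn, shift_coef_diag in H1, H2.
    rewrite (sum_n_ext_loc (fun i => (RtoC (shift_coef i (S n)) * a i)%C)
               (fun i => (RtoC (shift_coef i (S n)) * b i)%C)) in H1
      by (intros i Hi; rewrite IH by lia; reflexivity).
    rewrite (IH n) in H1 by lia; rewrite <- H2 in H1.
    change plus with Cplus in H1; rewrite !Cmult_1_l in H1.
    set (s := sum_n _ n) in H1.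
    transitivity (s + a (S n) - s)%C; [change_C_eq; ring|].
    rewrite H1; change_C_eq; ring.
Qed.

(* Off the positive real axis, the distance from [r u] to [[0, +oo)] is at
   least [r] if [Re u <= 0], and at least [r |Im u|] otherwise. *)
Lemma ray_dist_lower (u : C) : Cmod u = 1 -> u <> RtoC 1 ->
  exists d, 0 < d /\ forall r t, 0 <= r -> 0 <= t -> d * r <= Cmod (RtoC r * u - RtoC t).
Proof.
  intros Hu Hu1; destruct u as [u1 u2].
  assert (Hs : u1 ^ 2 + u2 ^ 2 = 1).
  { unfold Cmod in Hu; simpl in Hu.
    pose proof (sqrt_sqrt (u1 * (u1 * 1) + u2 * (u2 * 1))) as E.
    rewrite Hu in E; simpl; nra. }
  assert (Hsq : forall d r t, 0 <= d * r -> (d * r) ^ 2 <= (r * u1 - t) ^ 2 + (r * u2) ^ 2 ->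
             d * r <= Cmod (RtoC r * (u1, u2) - RtoC t)).
  { intros d r t Hdr H; unfold Cmod; simpl.
    rewrite <- (sqrt_pow2 (d * r)) by exact Hdr; apply sqrt_le_1_alt; simpl in H; nra. }
  destruct (Rle_dec u1 0) as [Hle|Hgt].
  - exists 1; split; [lra|]; intros r t Hr Ht; apply Hsq; [lra|].
    assert (r * u1 <= 0) by nra; nra.
  - assert (Hu2 : u2 <> 0).
    { intros ->; apply Hu1; assert (u1 = 1) by nra; subst u1; reflexivity. }
    exists (Rabs u2); split; [apply Rabs_pos_lt, Hu2|]; intros r t Hr Ht.
    apply Hsq; [apply Rmult_le_pos; [apply Rabs_pos|lra]|].
    rewrite Rpow_mult_distr, pow2_abs; pose proof (pow2_ge_0 (r * u1 - t)); nra.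
Qed.

Lemma inv_minus_expansion (x A : C) (N : nat) : x <> 0 -> (x - A)%C <> 0 ->
  (/ (x - A) - sum_n (fun n => match n with O => RtoC 0 | S j => A ^ j * / x ^ S j end) N
   = A ^ N * / x ^ N * / (x - A))%C.
Proof.
  intros Hx HxA; induction N as [|N IH].
  - rewrite sum_O; simpl; change_C_eq; field; exact HxA.
  - rewrite sum_Sn; change plus with Cplus; cbv iota.
    transitivity (/ (x - A) - sum_n (fun n => match n with O => RtoC 0 | S j => A ^ j * / x ^ S j end) N
                  - A ^ N * / x ^ S N)%C; [change_C_eq; ring|].
    rewrite IH; change (x ^ S N)%C with (x * x ^ N)%C; change (A ^ S N)%C with (A * A ^ N)%C.
    change_C_eq; field; repeat split; auto; apply Cpow_nz, Hx.
Qed.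

Lemma is_series_C_zero : is_series (fun _ : nat => RtoC 0) (RtoC 0).
Proof.
  eapply is_series_ext; [|apply (is_series_single 0 (RtoC 0))].
  intros k; cbv beta; destruct (Nat.eqb k 0); reflexivity.
Qed.

Lemma is_series_Cmult_r (a : nat -> C) (l c : C) :
  is_series a l -> is_series (fun n => (a n * c)%C) (l * c)%C.
Proof.
  intros H; apply (is_series_scal_l c) in H.
  replace (l * c)%C with (scal c l) by (change scal with Cmult; change_C_eq; ring).
  eapply is_series_ext; [|exact H]; intros n; cbv beta; change scal with Cmult; change_C_eq; ring.
Qed.

Lemma is_series_formal_partial (x : C) (N : nat) :
  is_series (fun k => sum_n (fun n => RtoC (ml_coef k) *
                 match n with O => RtoC 0 | S j => RtoC (INR (S k)) ^ j * / x ^ S j end) N)%C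
    (formal_partial (fun n => RtoC (formal_coef n)) N x).
Proof.
  unfold formal_partial; apply (is_series_sum_n (V := C_NormedModule)); intros [|j] _.
  - eapply is_series_ext; [|apply (is_series_Cmult_r _ _ (/ x ^ 0)%C is_series_C_zero)].
    intros k; cbv beta; change_C_eq; ring.
  - eapply is_series_ext;
      [|apply (is_series_Cmult_r _ _ (/ x ^ S j)%C (is_series_RtoC _ _ (is_series_ml_moment j)))].
    intros k; cbv beta; unfold ml_moment_term; rewrite RtoC_mult, RtoC_pow; change_C_eq; ring.
Qed.

Lemma ml_minus_formal_partial_le (x : C) (r d : R) (N : nat) : 0 < r -> 0 < d -> Cmod x = r ->
  (forall k, d * r <= Cmod (x - RtoC (INR (S k)))) ->
  Cmod (ml x - formal_partial (fun n => RtoC (formal_coef n)) N x) <= ml_moment N / (d * r ^ S N).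
Proof.
  intros Hr Hd Hx Hxk.
  assert (HxS : forall k, (x - RtoC (INR (S k)))%C <> 0).
  { intros k E; specialize (Hxk k); rewrite E, Cmod_0 in Hxk; nra. }
  assert (Hx0 : x <> 0) by (intros E; rewrite E, Cmod_0 in Hx; lra).
  assert (Hdiff := is_series_minus _ _ _ _ (is_series_ml x (not_posint_of_minus_neq_0 x HxS))
                     (is_series_formal_partial x N)).
  assert (Hb := is_series_scal_r (/ (d * r ^ S N)) _ _ (is_series_ml_moment N)).
  apply (is_series_Cmod_le _ _ _ _ Hdiff Hb); intros k.
  set (A := RtoC (INR (S k))).
  change (Cmod (ml_term x k - sum_n (fun n => RtoC (ml_coef k) *
                 match n with O => RtoC 0 | S j => A ^ j * / x ^ S j end) N)%C
          <= ml_moment_term N k * / (d * r ^ S N)).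
  rewrite (sum_n_mult_l (K := C_Ring)); change mult with Cmult.
  unfold ml_term; fold A; set (s := sum_n _ N).
  replace (RtoC (ml_coef k) * / (x - A) - RtoC (ml_coef k) * s)%C
    with (RtoC (ml_coef k) * (/ (x - A) - s))%C by (change_C_eq; ring).
  unfold s; rewrite inv_minus_expansion by (exact Hx0 || exact (HxS k)).
  rewrite !Cmod_mult, Cmod_RtoC_nonneg by (left; apply ml_coef_pos).
  rewrite Cmod_pow, Cmod_inv by (apply Cpow_nz, Hx0).
  rewrite Cmod_pow, Hx; unfold A; rewrite Cmod_RtoC_nonneg by apply pos_INR.
  pose proof (Cmod_inv_le _ (d * r) ltac:(nra) (Hxk k)).
  unfold ml_moment_term; pose proof (ml_coef_pos k); pose proof (pow_le (INR (S k)) N (pos_INR _)).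
  pose proof (pow_lt r N Hr).
  replace (/ (d * r ^ S N)) with (/ r ^ N * / (d * r)) by (simpl; field; split; lra).
  assert (0 < / r ^ N) by (apply Rinv_0_lt_compat; lra).
  replace (ml_coef k * INR (S k) ^ N * (/ r ^ N * / (d * r)))
    with (ml_coef k * (INR (S k) ^ N * / r ^ N * / (d * r))) by ring.
  apply Rmult_le_compat_l; [lra|]; apply Rmult_le_compat_l; [nra|assumption].
Qed.

Lemma y0_asymptotic (a : nat -> C) : formal_solution a ->
  forall u : C, Cmod u = 1 -> u <> RtoC 1 ->
  forall N : nat, exists M r0 : R, forall r : R, r0 <= r ->
    Cmod (y0 (RtoC r * u) - formal_partial a N (RtoC r * u)) <= M / r ^ S N.
Proof.
  intros Ha u Hu Hu1 N; destruct (ray_dist_lower u Hu Hu1) as [d [Hd Hdu]].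
  exists (ml_moment N / d), 1; intros r Hr.
  set (x := (RtoC r * u)%C).
  assert (Hxk : forall k, d * r <= Cmod (x - RtoC (INR (S k))))
    by (intros k; apply Hdu; [lra|apply pos_INR]).
  assert (Hxr : Cmod x = r) by (unfold x; rewrite Cmod_mult, Hu, Cmod_R, Rabs_pos_eq by lra; ring).
  assert (Hnp : ~ posint x).
  { apply not_posint_of_minus_neq_0; intros k E; specialize (Hxk k); rewrite E, Cmod_0 in Hxk; nra. }
  replace (formal_partial a N x) with (formal_partial (fun n => RtoC (formal_coef n)) N x)
    by (apply sum_n_ext; intros n; rewrite (formal_solution_unique _ _ Ha formal_solution_formal_coef n);
        reflexivity).
  rewrite y0_eq_ml by exact Hnp.
  replace (ml_moment N / d / r ^ S N) with (ml_moment N / (d * r ^ S N))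
    by (field; split; [lra|apply pow_nonzero; lra]).
  apply ml_minus_formal_partial_le; auto; lra.
Qed.

Lemma ml_term_factorial_form x k :
  ml_term x k = (RtoC (exp (-1)) * / ((x - RtoC (INR (S k))) * RtoC (INR (fact k))))%C.
Proof.
  assert (Hf : RtoC (INR (fact k)) <> 0) by (intros E; apply RtoC_inj in E; exact (INR_fact_neq_0 k E)).
  unfold ml_term, ml_coef; rewrite Cinv_mult, RtoC_div by (exact Hf || apply INR_fact_neq_0).
  unfold Cdiv; ring.
Qed.

Theorem mainTheorem1 :
  (forall x : C, ~ posint x -> is_series (y0_term x) (y0 x)) /\
  (forall x : C, ~ posint x -> ~ posint (Cplus x (RtoC 1)) ->
     y0 (Cplus x (RtoC 1)) = Cplus (Cmult (Cinv x) (y0 x)) (Cinv x)) /\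
  (forall x : C, ~ posint x -> @ex_derive C_AbsRing C_NormedModule y0 x) /\
  (forall n : nat, (1 <= n)%nat ->
     filterlim (fun x : C => Cmult (Cminus x (RtoC (INR n))) (y0 x))
       (within (fun x : C => x <> RtoC (INR n)) (locally (RtoC (INR n))))
       (locally (RtoC (exp (-1) / INR (fact (n - 1)))))) /\
  (forall x : C, ~ posint x ->
     is_series (fun k : nat =>
        Cmult (RtoC (exp (-1)))
          (Cinv (Cmult (Cminus x (RtoC (INR (S k)))) (RtoC (INR (fact k))))))
       (y0 x)) /\
  (forall a : nat -> C, formal_solution a ->
   forall u : C, Cmod u = 1 -> u <> (RtoC 1) ->
   forall N : nat, exists M r0 : R, forall r : R, r0 <= r ->
     Cmod (Cminus (y0 (Cmult (RtoC r) u)) (formal_partial a N (Cmult (RtoC r) u)))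
       <= M / r ^ (S N)).
Proof.
  split; [intros x _; apply is_series_y0|].
  split; [intros x _ _; apply y0_shift|].
  split; [exact ex_derive_y0|].
  split; [exact y0_residue|].
  split; [|exact y0_asymptotic].
  intros x Hx; rewrite (y0_eq_ml x Hx).
  eapply is_series_ext; [|apply is_series_ml, Hx]; intros k; apply ml_term_factorial_form.
Qed.
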